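(* Let $n\ge 5$ be odd, $k=\frac{n-3}{2}$, $G=(V,E)=K_n$, and let $C=(v_1,\dots,v_{2k+1})$ be a cycle of length $n-2$ in $G$, with $s,t$ the two vertices of $G$ not on $C$. Then the $C$-induced constraint \[ x_{\{s,t\}}+k\cdot x(\delta(V(C)))+\sum_{e\in E[V\setminus\{s,t\}]}\ell(e)\,x_e\ \ge\ 2k+1 \] is valid for $P^{\uparrow}_{\mathrm{odd}}(G)$ and defines a facet of it.
   Context: $K_n$ is the complete graph on $n$ vertices. For a graph $G=(V,E)$, $P_{\mathrm{odd}}(G)=\operatorname{conv}\{\chi^D\colon D \text{ an odd cycle of } G\}$ and $P^{\uparrow}_{\mathrm{odd}}(G)=P_{\mathrm{odd}}(G)+\mathbb{R}^E_{\ge0}$. $\delta(V(C))$ is the set of edges with exactly one endpoint on $C$, $E[S]$ the set of edges with both endpoints in $S$, and $x(S)=\sum_{e\in S}x_e$. For $i\ne j$, $\ell(\{v_i,v_j\})=|j-i|$ if $|j-i|$ is odd and $\ell(\{v_i,v_j\})=2k+1-|j-i|$ otherwise (the length of the odd-length path on $C$ between $v_i$ and $v_j$). *)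

From mathcomp Require Import all_boot all_order all_algebra.
Set Implicit Arguments. Unset Strict Implicit. Unset Printing Implicit Defensive.
Import Order.TTheory GRing.Theory Num.Theory.
Local Open Scope ring_scope.

Definition edge (n : nat) := {e : {set 'I_n} | #|e| == 2%N}.

Definition is_odd_cycle (n : nat) (D : {set edge n}) : Prop :=
  exists (m : nat) (v : 'I_m -> 'I_n),
    [/\ odd m, (3 <= m)%N, injective v &
        D = [set e : edge n | [exists i : 'I_m, val e == [set v i; v (ordS i)]]]].

Definition chi (R : numDomainType) (n : nat) (D : {set edge n}) : edge n -> R :=
  fun e => if e \in D then 1 else 0.

Definition Podd (R : numDomainType) (n : nat) (x : edge n -> R) : Prop :=
  exists lam : {set edge n} -> R,
    [/\ forall D, 0 <= lam D,
        forall D, lam D != 0 -> is_odd_cycle D,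
        \sum_D lam D = 1 &
        forall e, x e = \sum_D lam D * chi R D e].

Definition Podd_up (R : numDomainType) (n : nat) (x : edge n -> R) : Prop :=
  exists y, Podd y /\ forall e, y e <= x e.

Definition aff_indep (R : numDomainType) (T : finType) (m : nat)
  (p : 'I_m -> T -> R) : Prop :=
  forall mu : 'I_m -> R,
    \sum_i mu i = 0 -> (forall e, \sum_i mu i * p i e = 0) -> forall i, mu i = 0.

Definition has_affdim (R : numDomainType) (T : finType) (S : (T -> R) -> Prop)
  (d : nat) : Prop :=
  (exists p : 'I_d.+1 -> T -> R, (forall i, S (p i)) /\ aff_indep p) /\
  (forall p : 'I_d.+2 -> T -> R, (forall i, S (p i)) -> ~ aff_indep p).

Definition valid_ineq (R : numDomainType) (T : finType) (S : (T -> R) -> Prop)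
  (f : (T -> R) -> R) (b : R) : Prop := forall x, S x -> b <= f x.

Definition defines_facet (R : numDomainType) (T : finType) (S : (T -> R) -> Prop)
  (f : (T -> R) -> R) (b : R) : Prop :=
  valid_ineq S f b /\
  exists d, has_affdim S d.+1 /\ has_affdim (fun x => S x /\ f x = b) d.

(* l({v_i,v_j}) for the cycle of length m = 2k+1: length of the odd path *)
Definition ell_idx (m : nat) (i j : 'I_m) : nat :=
  let d := if (i <= j)%N then (j - i)%N else (i - j)%N in
  if odd d then d else (m - d)%N.

Definition ell (n m : nat) (c : 'I_m -> 'I_n) (e : edge n) : nat :=
  if [pick ij : 'I_m * 'I_m | (ij.1 < ij.2)%N && (val e == [set c ij.1; c ij.2])]
  is Some ij then ell_idx ij.1 ij.2 else 0%N.

Definition VC (n m : nat) (c : 'I_m -> 'I_n) : {set 'I_n} := [set c i | i in 'I_m].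

Definition C_lhs (R : numDomainType) (n k : nat) (c : 'I_(2 * k + 1) -> 'I_n)
  (s t : 'I_n) (x : edge n -> R) : R :=
  \sum_(e : edge n | val e == [set s; t]) x e
  + k%:R * \sum_(e : edge n | #|val e :&: VC c| == 1%N) x e
  + \sum_(e : edge n | val e \subset ~: [set s; t]) (ell c e)%:R * x e.

(* Read l(v_i v_j) as the
   displacement of the odd v_i-v_j path of C in the cover Z -> Z/(2k+1):
   the displacements of a closed walk add up to (2k+1) times its winding
   number, and they have the parity of the l-lengths, so an odd cycle inside
   V(C) has nonzero winding number and l-length at least 2k+1.  An odd cycle
   leaving V(C) crosses delta(V(C)) at least twice and has a third edge,
   hence weight at least 2k+1.
   Facet.  P_odd^up is upward closed, hence full-dimensional.  The tight odd
   cycles C, s c_i c_(i+1), t c_i c_(i+1), s t c_i, and every chord closed by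
   the even arc of C between its ends have incidence vectors spanning R^E:
   for w orthogonal to all of them, w(s c_i) - w(t c_i) alternates in sign
   around the odd cycle C, so it vanishes; then w equals w(st) on the edges
   of C, the equation of C forces this to be 0, and every chord inherits 0
   from its arc.  So |E| of them are affinely independent points of a face
   lying in a hyperplane. *)

From mathcomp Require Import all_boot all_order all_algebra.
From mathcomp Require Import zify lra.
Set Implicit Arguments. Unset Strict Implicit. Unset Printing Implicit Defensive.
Import Order.TTheory GRing.Theory Num.Theory.
Local Open Scope ring_scope.

Lemma iter_ordS L (i : 'I_L) j : val (iter j (@ordS L) i) = ((i + j) %% L)%N.
Proof.
elim: j => [|j IH] /=; first by rewrite addn0 modn_small.
by rewrite IH -addn1 modnDml addn1 addnS.
Qed.

Lemma iter_ordS_neq L (i : 'I_L) j : (0 < j < L)%N -> iter j (@ordS L) i != i.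
Proof.
move=> /andP[j_gt0 j_ltL]; apply/eqP => /(congr1 val); rewrite iter_ordS /=.
have i_ltL := ltn_ord i.
case: (ltnP (i + j) L) => ij_lt; first by rewrite modn_small //; lia.
by rewrite -[(i + j)%N](subnK ij_lt) modnDr modn_small; lia.
Qed.

Lemma ordS_neq L (i : 'I_L) : (1 < L)%N -> ordS i != i.
Proof. by move=> L_gt1; apply: (@iter_ordS_neq L i 1); rewrite L_gt1. Qed.

Lemma ordS2_neq L (i : 'I_L) : (2 < L)%N -> ordS (ordS i) != i.
Proof. by move=> L_gt2; apply: (@iter_ordS_neq L i 2); rewrite L_gt2. Qed.

Lemma ordS_alternating_eq0 (R : numDomainType) L (f : 'I_L -> R) : odd L ->
  (forall i, f (ordS i) = - f i) -> forall i, f i = 0.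
Proof.
move=> oddL f_ordS i.
have fiter j : f (iter j (@ordS L) i) = (-1) ^+ j * f i.
  elim: j => [|j IH] /=; first by rewrite expr0 mul1r.
  by rewrite f_ordS IH exprS mulN1r mulNr.
have : iter L (@ordS L) i = i by apply: val_inj; rewrite iter_ordS modnDr modn_small.
move/(congr1 f); rewrite fiter -signr_odd oddL mulN1r => /esym/eqP.
by rewrite -addr_eq0 -mulr2n mulrn_eq0 => /eqP.
Qed.

Lemma odd_sum_odd L (F : 'I_L -> nat) :
  (forall i, odd (F i)) -> odd (\sum_(i < L) F i) = odd L.
Proof.
move=> F_odd; rewrite (big_morph odd oddD (erefl : odd 0 = false)).
under eq_bigr do rewrite F_odd.
by rewrite big_const_ord; elim: L {F F_odd} => //= L ->.
Qed.

Lemma sum_ge_two_terms_plus_one (R : numDomainType) L (F : 'I_L -> R) i1 i2 :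
  (3 <= L)%N -> i1 != i2 -> (forall i, 1 <= F i) -> F i1 + F i2 + 1 <= \sum_i F i.
Proof.
move=> L_ge3 i12 F_ge1.
have [i3 i3_new] : exists i3, i3 \notin [set i1; i2].
  apply/existsP; rewrite -negb_forall; apply/negP => /forallP all_in.
  have : (#|'I_L| <= #|[set i1; i2]|)%N by apply/subset_leq_card/subsetP => i _; apply: all_in.
  by rewrite card_ord cards2 i12; lia.
move: i3_new; rewrite !inE negb_or => /andP[i31 i32].
have F_ge0 i : 0 <= F i by apply: le_trans (F_ge1 i).
rewrite (bigD1 i1) //= (bigD1 i2) 1?eq_sym //= (bigD1 i3) /=; last by rewrite i31 i32.
by rewrite !addrA -[X in X <= _]addr0 lerD ?sumr_ge0 // lerD.
Qed.

Lemma ordS_change_twice L (b : 'I_L -> bool) i1 :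
  b i1 != b (ordS i1) -> exists2 i2, i2 != i1 & b i2 != b (ordS i2).
Proof.
move=> b_i1; apply/exists_inP; apply: contraTT b_i1 => /exists_inPn b_const.
pose f i : int := b i.
have : \sum_i (f (ordS i) - f i) = 0.
  by rewrite sumrB [X in _ - X](reindex_inj (@ordS_inj L)) subrr.
rewrite (bigD1 i1) //= big1 ?addr0 => [|i /b_const].
  by rewrite /f; case: (b i1); case: (b (ordS i1)).
by rewrite negbK /f => /eqP->; rewrite subrr.
Qed.

Lemma ell_idxC m (i j : 'I_m) : ell_idx i j = ell_idx j i.
Proof.
by rewrite /ell_idx; case: (ltngtP i j) => ij; rewrite ?(ltnW ij) ?leqNgt ?ij ?leqnn.
Qed.

Section Winding.
Variable m : nat.
Hypothesis m_odd : odd m.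

(* [ell_disp a b] is the signed displacement, in the cover Z of Z/m, of the
   odd-length path of the m-cycle from a to b; [ell_wrap] records whether it
   winds through 0. *)
Definition ell_wrap (a b : nat) : int :=
  if odd (if (a <= b)%N then b - a else a - b)%N then 0 else if (a < b)%N then -1 else 1.

Definition ell_disp (a b : nat) : int := b%:Z - a%:Z + m%:Z * ell_wrap a b.

Lemma ell_idx_disp (a b : 'I_m) : ell_idx a b = `|ell_disp a b|%N.
Proof.
have := ltn_ord a; have := ltn_ord b; rewrite /ell_idx /ell_disp /ell_wrap.
by case: (leqP a b) => ?; case: ifP => ?; case: (ltnP a b) => ?; lia.
Qed.

Lemma ell_idx_odd (a b : 'I_m) : a != b -> odd (ell_idx a b).
Proof.
move=> ab_neq; have ab_neq' : nat_of_ord a != b by [].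
have a_lt := ltn_ord a; have b_lt := ltn_ord b; rewrite /ell_idx.
case: ifP => // d_even; rewrite oddB; last by case: (leqP a b); lia.
by rewrite d_even m_odd.
Qed.

Lemma ell_closed_walk_ge L (p : 'I_L -> 'I_m) : odd L ->
  (forall i, p i != p (ordS i)) -> (m <= \sum_i ell_idx (p i) (p (ordS i)))%N.
Proof.
move=> L_odd p_step; set S := (\sum_i _)%N.
set D := fun i => ell_disp (p i) (p (ordS i)); set w := \sum_i ell_wrap (p i) (p (ordS i)).
have S_odd : odd S by rewrite odd_sum_odd // => i; apply: ell_idx_odd.
have S_norm : S%:Z = \sum_i `|D i|.
  by rewrite -natz /S natr_sum; apply: eq_bigr => i _; rewrite natz ell_idx_disp abszE.
have sumD : \sum_i D i = m%:Z * w.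
  rewrite /D /ell_disp big_split /= sumrB mulr_sumr.
  have -> : \sum_i ((p (ordS i))%:Z) = \sum_i ((p i)%:Z).
    by rewrite [RHS](reindex_inj (@ordS_inj L)).
  by rewrite subrr add0r.
have S_par : (2 %| S%:Z - m%:Z * w)%Z.
  rewrite S_norm -sumD -sumrB; apply: rpred_sum => i _.
  by apply/dvdzP; exists (if 0 <= D i then 0 else - D i); case: ifP => ?; lia.
have w_neq0 : w != 0.
  apply: contraTneq S_odd => w0; move: S_par; rewrite w0 mulr0 subr0.
  by rewrite dvdzE /= dvdn2 => ->.
rewrite -(@ler_nat int) !natz S_norm; apply: le_trans (ler_norm_sum _ _ _).
by rewrite sumD normrM ger0_norm // ler_peMr // norm_intr_ge1.
Qed.

Lemma ell_idx_ordS (i : 'I_m) : ell_idx i (ordS i) = 1%N.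
Proof.
have i_lt := ltn_ord i; rewrite /ell_idx /=.
case: (ltnP i.+1 m) => i_last; first by rewrite modn_small // leqnSn subSnn.
have -> : (i.+1 %% m = 0)%N by rewrite (_ : i.+1 = m) ?modnn //; lia.
have -> : (if (i <= 0)%N then (0 - i) else (i - 0))%N = (m - 1)%N by case: leqP; lia.
by rewrite oddB ?m_odd //=; lia.
Qed.

Lemma ell_idx_iter_ordS (a : 'I_m) l : (l < m)%N -> ~~ odd l ->
  ell_idx (iter l (@ordS m) a) a = (m - l)%N.
Proof.
move=> l_lt l_even; have a_lt := ltn_ord a; rewrite /ell_idx iter_ordS.
case: (ltnP (a + l) m) => wraps.
  rewrite modn_small // (_ : (a + l <= a)%N = (l == 0%N)); last by lia.
  by case: eqP => [->|_]; rewrite ?addn0 ?subnn ?addKn // (negbTE l_even).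
rewrite -[(a + l)%N](subnK wraps) modnDr modn_small; last by lia.
have -> : (a + l - m <= a)%N by lia.
have -> : (a - (a + l - m) = m - l)%N by lia.
by rewrite oddB ?m_odd ?(negbTE l_even) //; apply: ltnW.
Qed.
End Winding.

Section AffineDimension.
Variables (R : numFieldType) (T : finType).
Implicit Types (S : (T -> R) -> Prop) (a w : T -> R).

Definition affine_mx r (p : 'I_r -> T -> R) : 'M[R]_(r, 1 + #|T|) :=
  row_mx (const_mx 1) (\matrix_(i, j) p i (enum_val j)).

Lemma aff_indep_row_free r (p : 'I_r -> T -> R) :
  aff_indep p -> row_free (affine_mx p).
Proof.
move=> p_indep; apply/inj_row_free => u u0; apply/rowP => i; rewrite mxE.
apply: (p_indep (fun j => u 0 j)).
- have := congr1 (fun M : 'rV_(1 + #|T|) => M 0 (lshift _ 0)) u0.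
  rewrite mul_mx_row row_mxEl !mxE => h; apply: etrans h.
  by apply: eq_bigr => j _; rewrite mxE mulr1.
- move=> e; have := congr1 (fun M : 'rV_(1 + #|T|) => M 0 (rshift 1 (enum_rank e))) u0.
  rewrite mul_mx_row row_mxEr !mxE => h; apply: etrans h.
  by apply: eq_bigr => j _; rewrite mxE enum_rankK.
Qed.

Lemma aff_dep_card r (p : 'I_r -> T -> R) : (#|T|.+1 < r)%N -> ~ aff_indep p.
Proof.
move=> r_gt /aff_indep_row_free /eqP p_free.
by have := rank_leq_col (affine_mx p); rewrite p_free add1n leqNgt r_gt.
Qed.

Lemma aff_dep_hyperplane (p : 'I_#|T|.+1 -> T -> R) a b e0 :
  a e0 != 0 -> (forall i, \sum_e a e * p i e = b) -> ~ aff_indep p.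
Proof.
move=> a_e0 p_on /aff_indep_row_free p_free.
have p_freeT : row_free (affine_mx p)^T.
  by rewrite /row_free mxrank_tr (eqP p_free) add1n.
pose v : 'rV[R]_(1 + #|T|) := row_mx (const_mx (- b)) (\row_j a (enum_val j)).
have v0 : v *m (affine_mx p)^T = 0 *m (affine_mx p)^T.
  apply/rowP => i; rewrite mul0mx /v /affine_mx tr_row_mx mul_row_col !mxE.
  rewrite big_ord1 !mxE mulr1 -(p_on i) (big_enum_val (A := T)) /= addrC.
  by apply/eqP; rewrite subr_eq0; apply/eqP/eq_bigr => j _; rewrite !mxE.
have := row_free_inj p_freeT v0.
move/(congr1 (fun M : 'rV_(1 + #|T|) => M 0 (rshift 1 (enum_rank e0)))).
by rewrite /v row_mxEr !mxE enum_rankK => /eqP; rewrite (negbTE a_e0).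
Qed.

Lemma has_affdim_up_closed S x0 :
  S x0 -> (forall x y, S x -> (forall e, x e <= y e) -> S y) -> has_affdim S #|T|.
Proof.
move=> S_x0 S_up; split; last by move=> p _; apply: aff_dep_card.
pose p (i : 'I_#|T|.+1) e : R := x0 e + (i == lift ord0 (enum_rank e))%:R.
exists p; split=> [i|mu mu_sum0 mu_p0].
  by apply: S_up S_x0 _ => e; rewrite lerDl ler0n.
have mu_lift e : mu (lift ord0 (enum_rank e)) = 0.
  have := mu_p0 e; under eq_bigr do rewrite mulrDr.
  rewrite big_split /= -mulr_suml mu_sum0 mul0r add0r.
  rewrite (bigD1 (lift ord0 (enum_rank e))) //= eqxx mulr1 big1 ?addr0 //.
  by move=> i /negbTE ->; rewrite mulr0.
move=> i; case: (unliftP ord0 i) => [j ->|->]; first by rewrite -(enum_valK j).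
move: mu_sum0; rewrite big_ord_recl big1 ?addr0 // => j _.
by rewrite -(enum_valK j).
Qed.

Lemma exists_aff_indep_subfamily (I : finType) (G : {pred I}) (P : I -> T -> R) :
  (forall w, (forall i, i \in G -> \sum_e P i e * w e = 0) -> forall e, w e = 0) ->
  exists g : 'I_#|T| -> I, (forall j, g j \in G) /\ aff_indep (fun j => P (g j)).
Proof.
move=> P_span.
pose A := \matrix_(i < #|G|, j < #|T|) P (enum_val i) (enum_val j).
have A_full : row_full A.
  suff : row_free A^T by rewrite /row_free /row_full mxrank_tr.
  apply/inj_row_free => v vA0; apply/rowP => j; rewrite mxE -(enum_valK j).
  apply: (P_span (fun e => v 0 (enum_rank e))) => i iG.
  have := congr1 (fun M : 'rV_#|G| => M 0 (enum_rank_in iG i)) vA0.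
  rewrite !mxE (big_enum_val (A := T)) => h; apply: etrans h; apply: eq_bigr => j' _.
  by rewrite !mxE enum_rankK_in // enum_valK mulrC.
pose g := fullrankfun A_full.
exists (fun j => enum_val (g j)); split=> [j|mu _ mu0 j]; first exact: enum_valP.
have : \row_j mu j *m rowsub g A = 0 *m rowsub g A.
  apply/rowP => e; rewrite mul0mx !mxE; apply: etrans (mu0 (enum_val e)).
  by apply: eq_bigr => i _; rewrite !mxE.
by move/(row_free_inj (fullrowsub_free A_full))/rowP/(_ j); rewrite !mxE.
Qed.

Lemma defines_facet_of_spanning_face S f a b (I : finType) (G : {pred I})
    (P : I -> T -> R) :
  (forall x, f x = \sum_e a e * x e) -> (exists e0, a e0 != 0) ->
  valid_ineq S f b -> (forall x y, S x -> (forall e, x e <= y e) -> S y) ->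
  (forall i, i \in G -> S (P i) /\ f (P i) = b) ->
  (forall w, (forall i, i \in G -> \sum_e P i e * w e = 0) -> forall e, w e = 0) ->
  defines_facet S f b.
Proof.
move=> fE [e0 a_e0] f_valid S_up P_face P_span; split=> //.
have [g [gG g_indep]] := exists_aff_indep_subfamily P_span.
have T_card : #|T|.-1.+1 = #|T| by apply/prednK/card_gt0P; exists e0.
exists #|T|.-1; rewrite /has_affdim T_card; split; last split.
- by have /P_face[S_x0 _] := gG (enum_rank e0); apply: has_affdim_up_closed S_x0 S_up.
- by exists (fun j => P (g j)); split=> // j; have /P_face[] := gG j.
- move=> p p_face; apply: (aff_dep_hyperplane (b := b) a_e0) => i.
  by have [_ <-] := p_face i; rewrite fE.
Qed.
End AffineDimension.

Lemma set2_eq (T : finType) (a b c d : T) : a != b ->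
  [set a; b] = [set c; d] -> (a = c /\ b = d) \/ (a = d /\ b = c).
Proof.
move=> ab_neq ab_cd.
have : a \in [set c; d] by rewrite -ab_cd set21.
have : b \in [set c; d] by rewrite -ab_cd set22.
rewrite !inE => /orP[]/eqP b_eq /orP[]/eqP a_eq; subst a b;
  by [left | right | rewrite eqxx in ab_neq].
Qed.

Lemma set2_pigeonhole (T : finType) (a b x y z : T) :
  x \in [set a; b] -> y \in [set a; b] -> z \in [set a; b] -> [|| y == x, z == y | z == x].
Proof. by rewrite !inE => /orP[]/eqP-> /orP[]/eqP-> /orP[]/eqP->; rewrite eqxx ?orbT. Qed.

Section OddCycles.
Variables (n : nat) (e0 : edge n).
Local Notation E := (edge n).

(* The edge {x, y}; the default [e0] is only returned when x = y. *)
Definition mk (x y : 'I_n) : E := insubd e0 [set x; y].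

Lemma mkE x y : x != y -> val (mk x y) = [set x; y].
Proof. by move=> xy; rewrite /mk insubdK // unfold_in cards2 xy. Qed.

Lemma mkC x y : mk x y = mk y x.
Proof. by rewrite /mk setUC. Qed.

Lemma edge_mk (e : E) : exists x y, x != y /\ e = mk x y.
Proof.
case: e => A A2; have [x [y [xy A_eq]]] := cards2P _ A2.
by exists x, y; split=> //; apply: val_inj; rewrite mkE.
Qed.

Definition cyc L (v : 'I_L -> 'I_n) : {set E} :=
  [set e : E | [exists i : 'I_L, val e == [set v i; v (ordS i)]]].

Lemma cyc_odd_cycle L (v : 'I_L -> 'I_n) :
  odd L -> (3 <= L)%N -> injective v -> is_odd_cycle (cyc v).
Proof. by move=> *; exists L, v. Qed.

Lemma cyc_sum (R : nmodType) L (v : 'I_L -> 'I_n) (g : E -> R) :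
  (3 <= L)%N -> injective v ->
  \sum_(e in cyc v) g e = \sum_(i < L) g (mk (v i) (v (ordS i))).
Proof.
move=> L_ge3 v_inj.
have v_step i : v i != v (ordS i).
  by rewrite (inj_eq v_inj) eq_sym ordS_neq //; lia.
have -> : cyc v = [set mk (v i) (v (ordS i)) | i : 'I_L].
  apply/setP => e; rewrite !inE; apply/existsP/imsetP => [[i /eqP e_i]|[i _ ->]].
    by exists i => //; apply: val_inj; rewrite mkE.
  by exists i; rewrite mkE.
rewrite big_imset // => i j _ _ /(congr1 val); rewrite !mkE // => /set2_eq.
case/(_ (v_step i)) => [[/v_inj] // | [/v_inj vi /v_inj vj]].
by have := ordS2_neq j L_ge3; rewrite -vi -vj eqxx.
Qed.

Definition tri (x y z : 'I_n) : {set E} := cyc (fun i : 'I_3 => nth x [:: x; y; z] i).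

Lemma tri_inj (x y z : 'I_n) : x != y -> y != z -> x != z ->
  injective (fun i : 'I_3 => nth x [:: x; y; z] i).
Proof.
move=> xy yz xz [[|[|[|?]]] ?] [[|[|[|?]]] ?] //= eq_xyz; apply: val_inj => //=;
  by move: xy yz xz; rewrite eq_xyz eqxx.
Qed.

Lemma tri_odd_cycle x y z : x != y -> y != z -> x != z -> is_odd_cycle (tri x y z).
Proof. by move=> xy yz xz; apply: cyc_odd_cycle => //; apply: tri_inj. Qed.

Lemma tri_sum (R : nmodType) x y z (g : E -> R) : x != y -> y != z -> x != z ->
  \sum_(e in tri x y z) g e = g (mk x y) + g (mk y z) + g (mk z x).
Proof.
move=> xy yz xz; rewrite /tri cyc_sum //; last exact: tri_inj.
by rewrite !big_ord_recl big_ord0 addr0 addrA.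
Qed.
End OddCycles.

Section OddCyclePolyhedron.
Variables (R : numDomainType) (n : nat).
Local Notation E := (edge n).

Lemma chi_sum (D : {set E}) (g : E -> R) :
  \sum_e g e * chi R D e = \sum_(e in D) g e.
Proof.
rewrite [RHS]big_mkcond; apply: eq_bigr => e _.
by rewrite /chi; case: (e \in D); rewrite ?mulr1 ?mulr0.
Qed.

Lemma chi_Podd_up (D : {set E}) : is_odd_cycle D -> Podd_up (chi R D).
Proof.
move=> D_odd; exists (chi R D); split=> //.
exists (fun D' => if D' == D then 1 else 0); split=> [D'|D'||].
- by case: ifP.
- by case: ifP => [/eqP -> | _] //; rewrite eqxx.
- by rewrite (bigD1 D) //= eqxx big1 ?addr0 // => D' /negbTE->.
- move=> e; rewrite (bigD1 D) //= eqxx mul1r big1 ?addr0 // => D' /negbTE->.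
  exact: mul0r.
Qed.

Lemma Podd_up_up_closed (x y : E -> R) :
  Podd_up x -> (forall e, x e <= y e) -> Podd_up y.
Proof. by move=> [z [z_odd z_le]] x_le; exists z; split=> // e; apply: le_trans (x_le e). Qed.

Lemma valid_ineq_Podd_up (f : (E -> R) -> R) (a : E -> R) (b : R) :
  (forall x, f x = \sum_e a e * x e) -> (forall e, 0 <= a e) ->
  (forall D, is_odd_cycle D -> b <= f (chi R D)) -> valid_ineq (@Podd_up R n) f b.
Proof.
move=> fE a_ge0 f_cyc x [y [[lam [lam_ge0 lam_odd lam_sum1 y_eq]] y_le]].
apply: (@le_trans _ _ (f y)); last first.
  by rewrite !fE; apply: ler_sum => e _; apply: ler_wpM2l.
have -> : f y = \sum_D lam D * f (chi R D).
  rewrite fE; under eq_bigr do rewrite y_eq mulr_sumr.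
  rewrite exchange_big /=; apply: eq_bigr => D _.
  by rewrite fE mulr_sumr; apply: eq_bigr => e _; rewrite mulrCA.
rewrite -[b]mul1r -lam_sum1 mulr_suml; apply: ler_sum => D _.
have [->|lam_neq0] := eqVneq (lam D) 0; first by rewrite !mul0r.
by rewrite ler_wpM2l // f_cyc //; apply: lam_odd.
Qed.
End OddCyclePolyhedron.

Section CInducedConstraint.
Variables (R : realFieldType) (k n : nat) (c : 'I_(2 * k + 1) -> 'I_n) (s t : 'I_n).
Hypotheses (k_gt0 : (0 < k)%N) (n_eq : n = (2 * k + 3)%N) (c_inj : injective c).
Hypotheses (st_neq : s != t) (cs_neq : forall i, c i != s) (ct_neq : forall i, c i != t).
Local Notation m := (2 * k + 1)%N.
Local Notation E := (edge n).

Lemma m_odd : odd m. Proof. by rewrite oddD oddM. Qed.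
Lemma m_ge3 : (3 <= m)%N. Proof. lia. Qed.

Lemma c_notin_st i : c i \notin [set s; t].
Proof. by rewrite !inE negb_or cs_neq ct_neq. Qed.

Lemma VC_eq : VC c = ~: [set s; t].
Proof.
apply/eqP; rewrite eqEcard; apply/andP; split.
  by apply/subsetP => _ /imsetP[i _ ->]; rewrite inE c_notin_st.
by rewrite cardsCs setCK cards2 st_neq /VC card_imset // !card_ord n_eq /=; lia.
Qed.

Lemma vertex_cases x : x \in [set s; t] \/ exists i, x = c i.
Proof.
case: (boolP (x \in [set s; t])) => [x_st|x_C]; first by left.
right; have /imsetP[i _ ->] : x \in VC c by rewrite VC_eq inE.
by exists i.
Qed.

Lemma card_st : #|[set s; t]| == 2%N. Proof. by rewrite cards2 st_neq. Qed.

Definition st_edge : E := exist _ [set s; t] card_st.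
Local Notation mk := (mk st_edge).

Lemma edge_cases e :
  [\/ e = mk s t, exists2 x, x \in [set s; t] & exists i, e = mk x (c i)
     | exists i j, i != j /\ e = mk (c i) (c j)].
Proof.
have [x [y [xy ->]]] := edge_mk st_edge e.
case: (vertex_cases x) => [x_st|[i ?]]; case: (vertex_cases y) => [y_st|[j ?]]; subst.
- apply: Or31; move: x_st y_st xy; rewrite !inE.
  by case/orP=> /eqP-> /orP[]/eqP->; rewrite ?eqxx // mkC.
- by apply: Or32; exists x => //; exists j.
- by apply: Or32; exists y => //; exists i; rewrite mkC.
- by apply: Or33; exists i, j; split=> //; apply: contra_neq xy => ->.
Qed.

Definition coef (e : E) : R :=
  (val e == [set s; t])%:R + k%:R * (#|val e :&: VC c| == 1%N)%:R
  + (val e \subset ~: [set s; t])%:R * (ell c e)%:R.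

Lemma C_lhsE (x : E -> R) : C_lhs c s t x = \sum_e coef e * x e.
Proof.
rewrite /C_lhs /coef; under [RHS]eq_bigr do rewrite !mulrDl.
rewrite !big_split /= mulr_sumr.
by congr (_ + _ + _); rewrite big_mkcond; apply: eq_bigr => e _;
  case: ifP => _; rewrite ?mulr1n ?mulr0n ?mul1r ?mulr1 ?mulr0 ?mul0r.
Qed.

Lemma ell_mk (i j : 'I_m) : i != j -> ell c (mk (c i) (c j)) = ell_idx i j.
Proof.
move=> ij; have cij : c i != c j by rewrite (inj_eq c_inj).
rewrite /ell; case: pickP => [[i' j'] /= /andP[_ /eqP] | no_pair].
  rewrite mkE // => /(set2_eq cij)[[/c_inj<- /c_inj<-] // | [/c_inj<- /c_inj<-]].
  exact: ell_idxC.
have [ij_lt|ji_lt|/val_inj ij_eq] := ltngtP i j.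
- by have := no_pair (i, j); rewrite /= ij_lt mkE // eqxx.
- by have := no_pair (j, i); rewrite /= ji_lt mkE // setUC eqxx.
- by rewrite ij_eq eqxx in ij.
Qed.

Lemma coef_st : coef (mk s t) = 1.
Proof.
rewrite /coef mkE // eqxx VC_eq setICr cards0 subUset !sub1set !inE !eqxx /=.
by rewrite mulr0 mul0r !addr0.
Qed.

Lemma coef_cross x i : x \in [set s; t] -> coef (mk x (c i)) = k%:R.
Proof.
move=> x_st; have x_ci : x != c i by apply: contraTneq x_st => ->; apply: c_notin_st.
rewrite /coef mkE //.
have -> : [set x; c i] :&: VC c = [set c i].
  apply/setP => z; move: (x_st); rewrite VC_eq !inE => x_st'.
  case: (eqVneq z (c i)) => [->|_].
    by rewrite orbT (negbTE (cs_neq i)) (negbTE (ct_neq i)).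
  by case: (eqVneq z x) => [->|_]; rewrite ?x_st' ?andbF.
have -> : ([set x; c i] == [set s; t]) = false.
  by apply: contraNF (c_notin_st i) => /eqP <-; rewrite !inE eqxx orbT.
by rewrite cards1 subUset sub1set inE x_st /= add0r mulr1 mul0r addr0.
Qed.

Lemma coef_chord i j : i != j -> coef (mk (c i) (c j)) = (ell_idx i j)%:R.
Proof.
move=> ij; have cij : c i != c j by rewrite (inj_eq c_inj).
rewrite /coef mkE //.
have -> : [set c i; c j] :&: VC c = [set c i; c j].
  by apply/setIidPl; rewrite VC_eq subUset !sub1set !in_setC !c_notin_st.
have -> : ([set c i; c j] == [set s; t]) = false.
  by apply: contraNF (c_notin_st i) => /eqP <-; rewrite !inE eqxx.
rewrite cards2 cij subUset !sub1set !in_setC !c_notin_st ell_mk //=.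
by rewrite mulr0 !add0r mul1r.
Qed.

Lemma coef_ge1 e : 1 <= coef e.
Proof.
case: (edge_cases e) => [->|[x x_st [i ->]]|[i [j [ij ->]]]].
- by rewrite coef_st.
- by rewrite coef_cross // ler1n.
- by rewrite coef_chord // ler1n odd_gt0 // (ell_idx_odd m_odd).
Qed.

Lemma cyc_coef_ge L (v : 'I_L -> 'I_n) : odd L -> (3 <= L)%N -> injective v ->
  m%:R <= \sum_i coef (mk (v i) (v (ordS i))).
Proof.
move=> L_odd L_ge3 v_inj; pose b i := v i \in [set s; t].
case: (boolP [exists i, b i]) => [/existsP[i0 b_i0] | /existsPn on_C]; last first.
  have /fin_all_exists[p v_eq] : forall i, exists j, v i = c j.
    move=> i; case: (vertex_cases (v i)) => // v_st.
    by move: (on_C i); rewrite /b v_st.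
  have p_step i : p i != p (ordS i).
    have : v i != v (ordS i) by rewrite (inj_eq v_inj) eq_sym ordS_neq //; lia.
    by apply: contra_neq; rewrite !v_eq => ->.
  under eq_bigr do rewrite !v_eq coef_chord //.
  by rewrite -natr_sum ler_nat (ell_closed_walk_ge m_odd).
have [i1 b_i1] : exists i1, b i1 != b (ordS i1).
  apply/existsP; apply: contraT => /existsPn no_change.
  have b_next i : b i -> b (ordS i) by move: (no_change i); rewrite negbK => /eqP<-.
  have := set2_pigeonhole b_i0 (b_next _ b_i0) (b_next _ (b_next _ b_i0)).
  have L_gt1 : (1 < L)%N by lia.
  by rewrite !(inj_eq v_inj) !(negbTE (ordS_neq _ L_gt1)) (negbTE (ordS2_neq _ L_ge3)).
have [i2 i21 b_i2] := ordS_change_twice b_i1.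
have coef_change i : b i != b (ordS i) -> coef (mk (v i) (v (ordS i))) = k%:R.
  rewrite /b; case: (vertex_cases (v i)) => [v_st|[j ->]];
    case: (vertex_cases (v (ordS i))) => [v'_st|[j' ->]];
    rewrite ?v_st ?v'_st ?(negbTE (c_notin_st _)) //.
  - by rewrite coef_cross.
  - by rewrite mkC coef_cross.
pose F i := coef (mk (v i) (v (ordS i))).
apply: le_trans (sum_ge_two_terms_plus_one (F := F) L_ge3 i21 (fun i => coef_ge1 _)).
by rewrite /F !coef_change // natrD natrM; lra.
Qed.

Lemma C_lhs_valid : valid_ineq (@Podd_up R n) (C_lhs c s t) m%:R.
Proof.
apply: (valid_ineq_Podd_up (a := coef)) => [|e|D [L [v [L_odd L_ge3 v_inj ->]]]].
- exact: C_lhsE.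
- exact: le_trans (coef_ge1 e).
- by rewrite C_lhsE chi_sum (cyc_sum st_edge _ L_ge3 v_inj) cyc_coef_ge.
Qed.

Definition arc (a : 'I_m) (l : nat) : {set E} :=
  cyc (fun r : 'I_l.+1 => c (iter r (@ordS m) a)).

Lemma arc_inj (a : 'I_m) l :
  (l < m)%N -> injective (fun r : 'I_l.+1 => c (iter r (@ordS m) a)).
Proof.
move=> l_lt r1 r2 /c_inj/(congr1 val); rewrite !iter_ordS => /eqP.
have r1_lt := ltn_ord r1; have r2_lt := ltn_ord r2.
by rewrite eqn_modDl !modn_small => [/eqP/val_inj // | | ]; lia.
Qed.

Lemma arc_sum a l (g : E -> R) : (2 <= l < m)%N ->
  \sum_(e in arc a l) g e =
  \sum_(r < l) g (mk (c (iter r (@ordS m) a)) (c (ordS (iter r (@ordS m) a))))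
  + g (mk (c (iter l (@ordS m) a)) (c a)).
Proof.
move=> /andP[l_ge2 l_lt]; rewrite /arc (cyc_sum st_edge); [|lia|exact: arc_inj].
rewrite big_ord_recr /= modnn; congr (_ + _).
by apply: eq_bigr => r _; rewrite modn_small // ltnS.
Qed.

Lemma chord_arc (i j : 'I_m) : i != j -> exists a (l : 'I_m),
  [/\ (2 <= l)%N, ~~ odd l & mk (c i) (c j) = mk (c (iter l (@ordS m) a)) (c a)].
Proof.
wlog ij_lt : i j / (i < j)%N => [wlog_ij ij|_].
  have [ij_lt|ji_lt|/val_inj ij_eq] := ltngtP i j; first exact: wlog_ij.
    have ji : j != i by rewrite eq_sym.
    have [a [l [l_ge2 l_even arc_ji]]] := wlog_ij j i ji_lt ji.
    by exists a, l; rewrite mkC.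
  by rewrite ij_eq eqxx in ij.
have i_lt := ltn_ord i; have j_lt := ltn_ord j.
case d_odd: (odd (j - i)).
- have l_lt : (m - (j - i) < m)%N by lia.
  exists j, (Ordinal l_lt); split=> /=.
  + have : ~~ odd (m - (j - i)) by rewrite oddB ?m_odd ?d_odd //; lia.
    have : (0 < m - (j - i))%N by lia.
    by case: (m - (j - i))%N => [|[|]].
  + by rewrite oddB ?m_odd ?d_odd //; lia.
  + congr (mk (c _) _); apply: val_inj; rewrite iter_ordS /=.
    by rewrite (_ : (j + (m - (j - i)) = i + m)%N) ?modnDr ?modn_small //; lia.
- have l_lt : (j - i < m)%N by lia.
  exists i, (Ordinal l_lt); split=> /=; rewrite ?d_odd //.
  + have : (0 < j - i)%N by lia.
    by case: (j - i)%N d_odd => [|[|]].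
  + rewrite mkC; congr (mk (c _) _); apply: val_inj; rewrite iter_ordS /=.
    by rewrite subnKC ?modn_small //; lia.
Qed.

Definition face_cycles : {set {set E}} :=
  [set cyc c] :|: [set tri x (c i) (c (ordS i)) | x in [set s; t], i in 'I_m]
  :|: [set tri s t (c i) | i : 'I_m]
  :|: [set arc a (l : 'I_m) | a in 'I_m, l in [set l : 'I_m | (2 <= l)%N && ~~ odd l]].

Lemma c_ordS_neq i : c i != c (ordS i).
Proof. by rewrite (inj_eq c_inj) eq_sym ordS_neq //; lia. Qed.

Lemma st_c_neq x i : x \in [set s; t] -> x != c i.
Proof. by apply: contraTneq => ->; apply: c_notin_st. Qed.

Lemma coef_C_edge i : coef (mk (c i) (c (ordS i))) = 1.
Proof. by rewrite coef_chord ?(ell_idx_ordS m_odd) // eq_sym ordS_neq //; lia. Qed.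

Lemma face_cycles_on_face D :
  D \in face_cycles -> is_odd_cycle D /\ C_lhs c s t (chi R D) = m%:R.
Proof.
have m_sum : k%:R + 1 + k%:R = m%:R :> R by rewrite natrD natrM; lra.
rewrite !in_setU in_set1 => /orP[/orP[/orP[/eqP->|]|]|].
- split; first exact: cyc_odd_cycle m_odd m_ge3 c_inj.
  rewrite C_lhsE chi_sum (cyc_sum st_edge _ m_ge3 c_inj).
  by under eq_bigr do rewrite coef_C_edge; rewrite sumr_const card_ord.
- case/imset2P => x i x_st _ ->.
  have [x_ci x_ci'] := (st_c_neq i x_st, st_c_neq (ordS i) x_st).
  split; first by apply: tri_odd_cycle; rewrite ?c_ordS_neq.
  rewrite C_lhsE chi_sum (tri_sum st_edge) ?c_ordS_neq //.
  by rewrite coef_cross // coef_C_edge mkC coef_cross.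
- case/imsetP => i _ ->.
  have [s_st t_st] := (set21 s t, set22 s t).
  have [s_ci t_ci] := (st_c_neq i s_st, st_c_neq i t_st).
  split; first exact: tri_odd_cycle.
  rewrite C_lhsE chi_sum (tri_sum st_edge) // coef_st coef_cross // mkC coef_cross //.
  by rewrite -m_sum addrC addrA.
- case/imset2P => a l _; rewrite inE => /andP[l_ge2 l_even] ->.
  have l_lt := ltn_ord l.
  split; first by apply: cyc_odd_cycle; [rewrite /= l_even | lia | exact: arc_inj].
  rewrite C_lhsE chi_sum arc_sum ?l_ge2 //.
  under eq_bigr do rewrite coef_C_edge.
  rewrite sumr_const card_ord coef_chord ?(ell_idx_iter_ordS m_odd) //.
    by rewrite -natrD subnKC // ltnW.
  by apply: iter_ordS_neq; lia.
Qed.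

Lemma tri_C_edge_face x i : x \in [set s; t] -> tri x (c i) (c (ordS i)) \in face_cycles.
Proof.
move=> x_st; rewrite !in_setU; apply/orP; left; apply/orP; left; apply/orP; right.
by apply/imset2P; exists x i.
Qed.

Lemma tri_st_face i : tri s t (c i) \in face_cycles.
Proof. by rewrite !in_setU; apply/orP; left; apply/orP; right; apply/imsetP; exists i. Qed.

Lemma arc_face a (l : 'I_m) : (2 <= l)%N -> ~~ odd l -> arc a l \in face_cycles.
Proof.
move=> l_ge2 l_even; rewrite !in_setU; apply/orP; right.
by apply/imset2P; exists a l; rewrite // inE l_ge2.
Qed.

Lemma face_cycles_span (w : E -> R) :
  (forall D, D \in face_cycles -> \sum_e chi R D e * w e = 0) -> forall e, w e = 0.
Proof.
move=> w_orth.
have w_sum D : D \in face_cycles -> \sum_(e in D) w e = 0.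
  move=> D_face; rewrite -chi_sum -[RHS](w_orth D D_face).
  by apply: eq_bigr => e _; rewrite mulrC.
have [s_st t_st] := (set21 s t, set22 s t).
pose z := w (mk s t); pose g i := w (mk (c i) (c (ordS i))).
pose a x i := w (mk x (c i)).
have tri_x x i : x \in [set s; t] -> a x i + g i + a x (ordS i) = 0.
  move=> x_st; have := w_sum _ (tri_C_edge_face i x_st).
  by rewrite (tri_sum st_edge) ?c_ordS_neq ?st_c_neq // [mk (c (ordS i)) x]mkC.
have tri_st i : z + a t i + a s i = 0.
  have := w_sum _ (tri_st_face i).
  by rewrite (tri_sum st_edge) ?st_c_neq // [mk (c i) s]mkC.
have a_st i : a s i = a t i.
  apply/eqP; rewrite -subr_eq0; apply/eqP; move: i.
  apply: (@ordS_alternating_eq0 _ _ (fun i => a s i - a t i) m_odd) => i.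
  by have := tri_x s i s_st; have := tri_x t i t_st; lra.
have g_z i : g i = z.
  by have := tri_x s i s_st; have := tri_st i; have := tri_st (ordS i); rewrite !a_st; lra.
have z0 : z = 0.
  have cyc_face : cyc c \in face_cycles by rewrite !in_setU in_set1 eqxx.
  have := w_sum _ cyc_face; rewrite (cyc_sum st_edge _ m_ge3 c_inj).
  under eq_bigr do rewrite -/(g _) g_z.
  by rewrite sumr_const card_ord => /eqP; rewrite mulrn_eq0 addn1 => /eqP.
have a0 x i : x \in [set s; t] -> a x i = 0.
  rewrite !inE => /orP[]/eqP->; have := tri_st i; rewrite ?a_st z0; lra.
move=> e; case: (edge_cases e) => [->|[x x_st [i ->]]|[i [j [ij ->]]]].
- exact: z0.
- exact: a0.
- have [a' [l [l_ge2 l_even ->]]] := chord_arc ij.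
  have := w_sum _ (arc_face a' l_ge2 l_even); rewrite arc_sum ?l_ge2 ?ltn_ord //.
  by under eq_bigr do rewrite -/(g _) g_z z0; rewrite big1 // add0r.
Qed.

Lemma C_lhs_facet : defines_facet (@Podd_up R n) (C_lhs c s t) m%:R.
Proof.
apply: (defines_facet_of_spanning_face (a := coef) (P := @chi R n) _ _ C_lhs_valid).
- exact: C_lhsE.
- by exists (mk s t); rewrite coef_st oner_eq0.
- exact: Podd_up_up_closed.
- by move=> D /face_cycles_on_face[D_odd D_lhs]; split=> //; apply: chi_Podd_up.
- exact: face_cycles_span.
Qed.
End CInducedConstraint.

Theorem lemma6 (R : realFieldType) (n k : nat) (c : 'I_(2 * k + 1) -> 'I_n)
  (s t : 'I_n) :
  (5 <= n)%N -> odd n -> k = ((n - 3) %/ 2)%N ->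
  injective c -> s != t -> (forall i, c i != s) -> (forall i, c i != t) ->
  valid_ineq (@Podd_up R n) (C_lhs c s t) (2 * k + 1)%:R /\
  defines_facet (@Podd_up R n) (C_lhs c s t) (2 * k + 1)%:R.
Proof.
move=> n_ge5 n_odd k_eq c_inj st_neq cs_neq ct_neq.
have n_mod2 : (n %% 2 = 1)%N by rewrite modn2 n_odd.
have k_gt0 : (0 < k)%N by lia.
have n_eq : n = (2 * k + 3)%N by lia.
split; [exact: C_lhs_valid | exact: C_lhs_facet].
Qed.
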